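(* Let $Y=\{(x,y)\in\mathbb{R}^2:(x/a)^2+y^2=1\}$ with $1<a\le\sqrt2$, and let $p\in Y$. There exists a unique equilateral triangle inscribed in $Y$ (all three vertices on $Y$) having $p$ as one of its vertices.
   Context: Equilateral means with respect to the Euclidean metric on $\mathbb{R}^2$. *)

From Stdlib Require Import Reals.
Open Scope R_scope.

Definition point : Type := (R * R)%type.

Definition dist2 (p q : point) : R :=
  sqrt ((fst p - fst q) ^ 2 + (snd p - snd q) ^ 2).

Definition on_ellipse (a : R) (p : point) : Prop :=
  (fst p / a) ^ 2 + (snd p) ^ 2 = 1.

Definition equilateral (p q r : point) : Prop :=
  p <> q /\ q <> r /\ r <> p /\
  dist2 p q = dist2 q r /\ dist2 q r = dist2 r p.

Definition inscribed_equilateral (a : R) (p q r : point) : Prop :=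
  on_ellipse a p /\ on_ellipse a q /\ on_ellipse a r /\ equilateral p q r.

(* Translate [p] to the origin: the ellipse becomes [lin w + quad w = 0] with [lin]
   linear and [quad] positive definite, so the line through [0] and [w] meets it
   again only at [- lin w / quad w * w].  Up to relabelling, the other two vertices
   are [p + w] and [p + rot w], with [rot] the rotation by [pi/3]; hence the
   direction of [w] is a root of the cubic form [lin w quad (rot w) - lin (rot w) quad w].
   In complex notation this form is [Re (C z |z|^2 + D z^3)] with [3 |D| < |C|]
   (this only needs [1 <= a^2 < 7/3]), and in a suitable chart it becomes a strictly
   monotonic cubic.  So there is exactly one root line, hence exactly one triangle. *)

From Stdlib Require Import Reals Lra Psatz.
Open Scope R_scope.

Definition cubic (f3 f2 f1 f0 t : R) : R := f3 * t ^ 3 + f2 * t ^ 2 + f1 * t + f0.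

Lemma cubic_root_exists f3 f2 f1 f0 : 0 < f3 -> exists t, cubic f3 f2 f1 f0 t = 0.
Proof.
  intros h3.
  set (M := 1 + (Rabs f0 + Rabs f1 + Rabs f2) / f3).
  assert (hM : f3 * M = f3 + Rabs f0 + Rabs f1 + Rabs f2) by (unfold M; field; lra).
  assert (hM1 : 1 <= M).
  { assert (0 <= (Rabs f0 + Rabs f1 + Rabs f2) / f3); [|unfold M; lra].
    pose proof (Rabs_pos f0); pose proof (Rabs_pos f1); pose proof (Rabs_pos f2).
    unfold Rdiv; apply Rmult_le_pos; [lra | apply Rlt_le, Rinv_0_lt_compat; lra]. }
  pose proof (Rle_abs f0); pose proof (Rle_abs f1); pose proof (Rle_abs f2).
  pose proof (Rle_abs (- f0)); pose proof (Rle_abs (- f1)); pose proof (Rle_abs (- f2)).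
  rewrite !Rabs_Ropp in *.
  assert (hM2 : M <= M ^ 2) by nra.
  destruct (IVT (cubic f3 f2 f1 f0) (- M) M) as [t [_ ht]].
  - intro x; unfold cubic; reg.
  - lra.
  - unfold cubic. replace ((- M) ^ 3) with (- (M * M ^ 2)) by ring.
    replace ((- M) ^ 2) with (M ^ 2) by ring. nra.
  - unfold cubic. replace (M ^ 3) with (M * M ^ 2) by ring. nra.
  - exists t; exact ht.
Qed.

(* [cubic t - cubic t'] is [t - t'] times a quadratic form in [(t, t')] which is
   positive definite when [f2^2 < 3 f1 f3]. *)
Lemma cubic_root_unique f3 f2 f1 f0 t t' : 0 < f3 -> f2 ^ 2 < 3 * f1 * f3 ->
  cubic f3 f2 f1 f0 t = 0 -> cubic f3 f2 f1 f0 t' = 0 -> t = t'.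
Proof.
  unfold cubic; intros h3 hd e e'.
  set (q := f3 * (t ^ 2 + t * t' + t' ^ 2) + f2 * (t + t') + f1).
  assert (hq : 0 < q).
  { assert (4 * f3 * q = 3 * (f3 * (t + t') + 2 * f2 / 3) ^ 2
                        + 4 / 3 * (3 * f1 * f3 - f2 ^ 2) + (f3 * (t - t')) ^ 2)
      by (unfold q; field).
    pose proof (pow2_ge_0 (f3 * (t + t') + 2 * f2 / 3)).
    pose proof (pow2_ge_0 (f3 * (t - t'))). nra. }
  assert (hf : (t - t') * q = 0) by (unfold q; nra).
  apply Rmult_integral in hf; lra.
Qed.

(* With [u = u1 + i u2], [C = C1 + i C2] and [D = D1 + i D2] this is
   [Re (C u |u|^2 + D u^3)]. *)
Definition harmonic_cubic (C1 C2 D1 D2 u1 u2 : R) : R :=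
  (u1 ^ 2 + u2 ^ 2) * (C1 * u1 - C2 * u2)
  + D1 * (u1 ^ 3 - 3 * u1 * u2 ^ 2) - D2 * (3 * u1 ^ 2 * u2 - u2 ^ 3).

Section HarmonicCubic.
Variables C1 C2 D1 D2 : R.
Hypothesis hCD : 9 * (D1 ^ 2 + D2 ^ 2) < C1 ^ 2 + C2 ^ 2.

(* In the coordinate [X + i Y = C u], the cubic becomes
   [Re (|C|^4 Z |Z|^2 + (c + i d) Z^3)] with [c + i d = D conj(C)^3]. *)
Let n := C1 ^ 2 + C2 ^ 2.
Let c := D1 * (C1 ^ 3 - 3 * C1 * C2 ^ 2) + D2 * (3 * C1 ^ 2 * C2 - C2 ^ 3).
Let d := D2 * (C1 ^ 3 - 3 * C1 * C2 ^ 2) - D1 * (3 * C1 ^ 2 * C2 - C2 ^ 3).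
Let chart_cubic := cubic (n ^ 2 + c) (-3 * d) (n ^ 2 - 3 * c) d.

Lemma harmonic_cubic_chart u1 u2 (X := C1 * u1 - C2 * u2) (Y := C2 * u1 + C1 * u2) :
  n ^ 3 * harmonic_cubic C1 C2 D1 D2 u1 u2 =
  (n ^ 2 + c) * X ^ 3 - 3 * d * X ^ 2 * Y + (n ^ 2 - 3 * c) * X * Y ^ 2 + d * Y ^ 3.
Proof. unfold harmonic_cubic, X, Y, n, c, d; ring. Qed.

Lemma chart_cubic_coeffs : 0 < n ^ 2 + c /\ (-3 * d) ^ 2 < 3 * (n ^ 2 - 3 * c) * (n ^ 2 + c).
Proof.
  assert (hcd : c ^ 2 + d ^ 2 = (D1 ^ 2 + D2 ^ 2) * n ^ 3) by (unfold c, d, n; ring).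
  assert (hn : 0 < n) by (unfold n in *; nra).
  assert (hn3 : 0 < n ^ 3) by (apply pow_lt; lra).
  assert (h9 : 9 * (c ^ 2 + d ^ 2) < (n ^ 2) ^ 2).
  { rewrite hcd. replace ((n ^ 2) ^ 2) with (n * n ^ 3) by ring. fold n in hCD. nra. }
  assert (h3c : 3 * Rabs c < n ^ 2).
  { apply Rsqr_incrst_0; [ | pose proof (Rabs_pos c); lra | nra].
    unfold Rsqr. replace (3 * Rabs c * (3 * Rabs c)) with (9 * (Rabs c * Rabs c)) by ring.
    rewrite <- Rabs_mult, Rabs_right by nra. nra. }
  pose proof (Rle_abs c); pose proof (Rle_abs (- c)); rewrite Rabs_Ropp in *.
  split; nra.
Qed.

Lemma harmonic_cubic_root_exists :
  exists u1 u2, 0 < u1 ^ 2 + u2 ^ 2 /\ harmonic_cubic C1 C2 D1 D2 u1 u2 = 0.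
Proof.
  destruct chart_cubic_coeffs as [h3 _].
  destruct (cubic_root_exists _ (-3 * d) (n ^ 2 - 3 * c) d h3) as [t ht].
  assert (hn : 0 < n) by (unfold n in *; nra).
  exists (C1 * t + C2), (C1 - C2 * t). split.
  - replace ((C1 * t + C2) ^ 2 + (C1 - C2 * t) ^ 2) with (n * (1 + t ^ 2)) by (unfold n; ring).
    pose proof (pow2_ge_0 t). nra.
  - apply (Rmult_eq_reg_l (n ^ 3)); [|apply pow_nonzero; lra].
    rewrite harmonic_cubic_chart, Rmult_0_r.
    replace (C1 * (C1 * t + C2) - C2 * (C1 - C2 * t)) with (n * t) by (unfold n; ring).
    replace (C2 * (C1 * t + C2) + C1 * (C1 - C2 * t)) with n by (unfold n; ring).
    unfold cubic in ht. rewrite <- (Rmult_0_r (n ^ 3)), <- ht. ring.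
Qed.

Lemma harmonic_cubic_root_chart u1 u2 (X := C1 * u1 - C2 * u2) (Y := C2 * u1 + C1 * u2) :
  0 < u1 ^ 2 + u2 ^ 2 -> harmonic_cubic C1 C2 D1 D2 u1 u2 = 0 ->
  Y <> 0 /\ chart_cubic (X / Y) = 0.
Proof.
  intros hu hH.
  destruct chart_cubic_coeffs as [h3 _].
  assert (hn : 0 < n) by (unfold n in *; nra).
  pose proof (harmonic_cubic_chart u1 u2) as hchart. fold X Y in hchart.
  rewrite hH, Rmult_0_r in hchart.
  assert (hY : Y <> 0).
  { intro hY0. rewrite hY0 in hchart.
    assert (hXY : X ^ 2 + Y ^ 2 = n * (u1 ^ 2 + u2 ^ 2)) by (unfold X, Y, n; ring).
    assert (hX : X = 0).
    { assert (hX3 : (n ^ 2 + c) * X ^ 3 = 0) by (rewrite hchart; ring).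
      destruct (Req_dec X 0) as [|hX]; [assumption|].
      apply Rmult_integral in hX3 as [|hX3]; [lra|].
      exfalso; exact (pow_nonzero X 3 hX hX3). }
    rewrite hX, hY0 in hXY. nra. }
  split; [exact hY|].
  unfold chart_cubic, cubic.
  apply (Rmult_eq_reg_r (Y ^ 3)); [|apply pow_nonzero; exact hY].
  rewrite Rmult_0_l, hchart. field. exact hY.
Qed.

Lemma harmonic_cubic_roots_parallel u1 u2 v1 v2 :
  0 < u1 ^ 2 + u2 ^ 2 -> 0 < v1 ^ 2 + v2 ^ 2 ->
  harmonic_cubic C1 C2 D1 D2 u1 u2 = 0 -> harmonic_cubic C1 C2 D1 D2 v1 v2 = 0 ->
  u1 * v2 - u2 * v1 = 0.
Proof.
  intros hu hv hHu hHv.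
  destruct chart_cubic_coeffs as [h3 hdisc].
  assert (hn : 0 < n) by (unfold n in *; nra).
  destruct (harmonic_cubic_root_chart u1 u2 hu hHu) as [hY hu'].
  destruct (harmonic_cubic_root_chart v1 v2 hv hHv) as [hY' hv'].
  pose proof (cubic_root_unique _ _ _ _ _ _ h3 hdisc hu' hv') as ht.
  apply (Rmult_eq_reg_l n); [|lra].
  transitivity ((C1 * u1 - C2 * u2) * (C2 * v1 + C1 * v2)
                - (C1 * v1 - C2 * v2) * (C2 * u1 + C1 * u2)); [unfold n; ring|].
  field_simplify_eq in ht; [split; assumption|].
  rewrite Rmult_0_r. lra.
Qed.
End HarmonicCubic.

Definition vadd (p w : point) : point := (fst p + fst w, snd p + snd w).
Definition vsub (q p : point) : point := (fst q - fst p, snd q - snd p).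
Definition vscale (k : R) (w : point) : point := (k * fst w, k * snd w).
Definition sqnorm (w : point) : R := fst w ^ 2 + snd w ^ 2.

(* For [s = sqrt 3] this is the rotation by [pi/3], for [s = - sqrt 3] the one by [- pi/3]. *)
Definition rot (s : R) (w : point) : point :=
  (fst w / 2 - s * snd w / 2, s * fst w / 2 + snd w / 2).

Lemma vsub_vadd p w : vsub (vadd p w) p = w.
Proof. destruct w; unfold vsub, vadd; cbn [fst snd]; f_equal; ring. Qed.

Lemma vadd_vsub p q : vadd p (vsub q p) = q.
Proof. destruct p, q; unfold vsub, vadd; cbn [fst snd]; f_equal; ring. Qed.

Lemma dist2_sqnorm p q : dist2 p q = sqrt (sqnorm (vsub q p)).
Proof. unfold dist2, sqnorm, vsub; cbn [fst snd]; f_equal; ring. Qed.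

Lemma sqnorm_pos_vsub q p : 0 < sqnorm (vsub q p) <-> q <> p.
Proof.
  destruct q as [x y], p as [x' y']; unfold sqnorm, vsub; simpl; split.
  - intros h e; injection e as -> ->; lra.
  - intro hne. apply Rnot_le_lt; intro hle. apply hne.
    pose proof (pow2_ge_0 (x - x')); pose proof (pow2_ge_0 (y - y')).
    f_equal; apply Rminus_diag_uniq, Rsqr_0_uniq; unfold Rsqr; simpl in *; lra.
Qed.

Lemma sqnorm_nonneg w : 0 <= sqnorm w.
Proof. unfold sqnorm; pose proof (pow2_ge_0 (fst w)); pose proof (pow2_ge_0 (snd w)); lra. Qed.

Lemma vsub_vadd2 p x y : vsub (vadd p x) (vadd p y) = vsub x y.
Proof. unfold vsub, vadd; cbn [fst snd]; f_equal; ring. Qed.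

Lemma vsub_vsub p q r : vsub (vsub r p) (vsub q p) = vsub r q.
Proof. unfold vsub; cbn [fst snd]; f_equal; ring. Qed.

Lemma dist2_comm p q : dist2 p q = dist2 q p.
Proof. unfold dist2; f_equal; ring. Qed.

Lemma rot_vscale s k w : rot s (vscale k w) = vscale k (rot s w).
Proof. unfold rot, vscale; simpl; f_equal; field. Qed.

Section Rotation.
Variable s : R.
Hypothesis hs : s * s = 3.

Lemma sqnorm_rot w : sqnorm (rot s w) = sqnorm w.
Proof.
  unfold sqnorm, rot; simpl.
  transitivity ((1 + s * s) / 4 * (fst w ^ 2 + snd w ^ 2)); [field | rewrite hs; field].
Qed.

Lemma sqnorm_rot_sub w : sqnorm (vsub (rot s w) w) = sqnorm w.
Proof.
  unfold sqnorm, rot, vsub; simpl.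
  transitivity ((1 + s * s) / 4 * (fst w ^ 2 + snd w ^ 2)); [field | rewrite hs; field].
Qed.

Lemma rot_rot_opp w : rot s (rot (- s) w) = w.
Proof.
  destruct w as [x y]; unfold rot; simpl. f_equal.
  - transitivity ((1 + s * s) / 4 * x); [field | rewrite hs; field].
  - transitivity ((1 + s * s) / 4 * y); [field | rewrite hs; field].
Qed.

(* [v] is determined by its inner product [|w|^2 / 2] with [w] and its cross
   product [k] with [w], and [k^2 = 3/4 |w|^4]. *)
Lemma equal_sides_rot w v : 0 < sqnorm w -> sqnorm v = sqnorm w ->
  sqnorm (vsub v w) = sqnorm w -> v = rot s w \/ w = rot s v.
Proof.
  destruct w as [w1 w2], v as [v1 v2]; unfold sqnorm, vsub; cbn [fst snd].
  intros hn e1 e2.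
  set (n := w1 ^ 2 + w2 ^ 2) in *.
  assert (dot : w1 * v1 + w2 * v2 = n / 2) by (unfold n in *; nra).
  set (k := w1 * v2 - w2 * v1).
  assert (hv1 : v1 * n = n / 2 * w1 - k * w2) by (rewrite <- dot; unfold k, n; ring).
  assert (hv2 : v2 * n = n / 2 * w2 + k * w1) by (rewrite <- dot; unfold k, n; ring).
  assert (hk : (k - s * n / 2) * (k + s * n / 2) = 0).
  { transitivity (n * (v1 ^ 2 + v2 ^ 2) - (w1 * v1 + w2 * v2) ^ 2 - s * s * n * n / 4);
      [unfold k, n; field|].
    rewrite e1, dot, hs. field. }
  apply Rmult_integral in hk as [hk|hk]; [left | right].
  - unfold rot; cbn [fst snd]; f_equal; apply (Rmult_eq_reg_r n); try lra;
      [rewrite hv1 | rewrite hv2]; replace k with (s * n / 2) by lra; field.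
  - replace (v1, v2) with (rot (- s) (w1, w2)); [symmetry; apply rot_rot_opp|].
    unfold rot; cbn [fst snd]; f_equal; apply (Rmult_eq_reg_r n); try lra;
      [rewrite hv1 | rewrite hv2]; replace k with (- (s * n / 2)) by lra; field.
Qed.

Lemma equilateral_rot p w : 0 < sqnorm w -> equilateral p (vadd p w) (vadd p (rot s w)).
Proof.
  intro hw.
  pose proof (sqnorm_rot w) as hrot. pose proof (sqnorm_rot_sub w) as hsub.
  unfold equilateral.
  rewrite (dist2_comm _ p), !dist2_sqnorm, !vsub_vadd, vsub_vadd2, hsub, hrot.
  repeat split; [apply not_eq_sym | apply not_eq_sym | |..]; try apply sqnorm_pos_vsub;
    rewrite ?vsub_vadd, ?vsub_vadd2, ?hsub, ?hrot; easy.
Qed.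

Lemma equilateral_vertex p q r : equilateral p q r ->
  0 < sqnorm (vsub q p) /\
  (vsub r p = rot s (vsub q p) \/ vsub q p = rot s (vsub r p)).
Proof.
  intros (hpq & _ & _ & hpq_qr & hqr_rp).
  rewrite (dist2_comm r p), !dist2_sqnorm, <- (vsub_vsub p q r) in *.
  assert (hw : 0 < sqnorm (vsub q p)) by (apply sqnorm_pos_vsub; congruence).
  apply sqrt_inj in hpq_qr, hqr_rp; try apply sqnorm_nonneg.
  split; [exact hw|]. apply equal_sides_rot; congruence.
Qed.
End Rotation.

Definition lin (A B : R) (w : point) : R := 2 * (A * fst w + B * snd w).
Definition quad (b : R) (w : point) : R := b * fst w ^ 2 + snd w ^ 2.

(* The ellipse [b x^2 + y^2 = 1] translated by [- (x0, y0)], when [A = b x0],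
   [B = y0] and [(x0, y0)] lies on it. *)
Definition conic (b A B : R) (w : point) : R := lin A B w + quad b w.

(* The line through [w] meets the conic again at [- lin w / quad w * w]; this
   cubic form vanishes when that parameter is the same for [w] and [rot s w]. *)
Definition chord_cubic (s b A B : R) (w : point) : R :=
  lin A B w * quad b (rot s w) - lin A B (rot s w) * quad b w.

Lemma conic_vscale b A B k w : conic b A B (vscale k w) = k * (lin A B w + k * quad b w).
Proof. unfold conic, lin, quad, vscale; cbn [fst snd]; ring. Qed.

Lemma quad_pos b w : 0 < b -> 0 < sqnorm w -> 0 < quad b w.
Proof. unfold quad, sqnorm; intros; nra. Qed.

Lemma chord_cubic_of_conic s b A B u :
  conic b A B u = 0 -> conic b A B (rot s u) = 0 -> chord_cubic s b A B u = 0.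
Proof.
  unfold conic, chord_cubic; intros hu hru.
  replace (lin A B u) with (- quad b u) by lra.
  replace (lin A B (rot s u)) with (- quad b (rot s u)) by lra. ring.
Qed.

Lemma cross_eq0_vscale u v : 0 < sqnorm u -> fst u * snd v - snd u * fst v = 0 ->
  v = vscale ((fst u * fst v + snd u * snd v) / sqnorm u) u.
Proof.
  destruct u as [u1 u2], v as [v1 v2]; unfold sqnorm, vscale; cbn [fst snd].
  intros hu hx. f_equal; apply (Rmult_eq_reg_r (u1 ^ 2 + u2 ^ 2)); try lra;
    field_simplify; try lra.
  - transitivity (u1 ^ 2 * v1 + u1 * u2 * v2 - u2 * (u1 * v2 - u2 * v1)); [ring|].
    rewrite hx; ring.
  - transitivity (u1 * u2 * v1 + u2 ^ 2 * v2 + u1 * (u1 * v2 - u2 * v1)); [ring|].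
    rewrite hx; ring.
Qed.

Section RotatedChords.
Variables s b A B : R.
Hypothesis hs : s * s = 3.
Hypothesis hb : 3 / 7 < b <= 1.
Hypothesis hAB : 0 < A ^ 2 + B ^ 2.

Let C1 := A - s * b * B.
Let C2 := - (b * B + s * A).
Let D1 := (1 - b) * A / 2.
Let D2 := - (1 - b) * B / 2.

Lemma chord_cubic_harmonic w :
  chord_cubic s b A B w = harmonic_cubic C1 C2 D1 D2 (fst w) (snd w).
Proof.
  destruct w as [w1 w2].
  unfold chord_cubic, harmonic_cubic, lin, quad, rot, C1, C2, D1, D2; cbn [fst snd].
  apply Rminus_diag_uniq.
  transitivity ((A * w1 + B * w2) * (b * w2 ^ 2 + w1 ^ 2) / 2 * (s * s - 3)); [field|].
  rewrite hs; ring.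
Qed.

Lemma chord_harmonic_bound : 9 * (D1 ^ 2 + D2 ^ 2) < C1 ^ 2 + C2 ^ 2.
Proof.
  replace (C1 ^ 2 + C2 ^ 2) with (4 * A ^ 2 + 4 * b ^ 2 * B ^ 2)
    by (unfold C1, C2; transitivity (A ^ 2 + b ^ 2 * B ^ 2 + s * s * (b ^ 2 * B ^ 2 + A ^ 2));
        [rewrite hs; ring | ring]).
  replace (9 * (D1 ^ 2 + D2 ^ 2)) with (9 / 4 * (1 - b) ^ 2 * (A ^ 2 + B ^ 2))
    by (unfold D1, D2; field).
  apply Rlt_0_minus.
  replace (4 * A ^ 2 + 4 * b ^ 2 * B ^ 2 - 9 / 4 * (1 - b) ^ 2 * (A ^ 2 + B ^ 2))
    with ((4 - 9 / 4 * (1 - b) ^ 2) * A ^ 2 + (4 * b ^ 2 - 9 / 4 * (1 - b) ^ 2) * B ^ 2)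
    by ring.
  assert (hA : 0 < 4 - 9 / 4 * (1 - b) ^ 2) by nra.
  assert (hB : 0 < 4 * b ^ 2 - 9 / 4 * (1 - b) ^ 2) by nra.
  pose proof (pow2_ge_0 A) as hA2; pose proof (pow2_ge_0 B) as hB2.
  destruct (Rlt_or_le 0 (A ^ 2)) as [hA0|hA0].
  - pose proof (Rmult_lt_0_compat _ _ hA hA0); pose proof (Rmult_le_pos _ _ (Rlt_le _ _ hB) hB2).
    lra.
  - assert (hB0 : 0 < B ^ 2) by lra.
    pose proof (Rmult_lt_0_compat _ _ hB hB0); pose proof (Rmult_le_pos _ _ (Rlt_le _ _ hA) hA2).
    lra.
Qed.

Lemma chord_cubic_root_lin_neq0 w : 0 < sqnorm w -> chord_cubic s b A B w = 0 -> lin A B w <> 0.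
Proof.
  intros hw hF hL.
  unfold chord_cubic in hF. rewrite hL, Rmult_0_l, Rminus_0_l in hF.
  assert (hQ : 0 < quad b w) by (apply quad_pos; lra).
  assert (hLr : lin A B (rot s w) = 0).
  { apply Ropp_eq_0_compat in hF. rewrite Ropp_involutive in hF.
    apply Rmult_integral in hF as [|]; lra. }
  assert (hs0 : s <> 0) by (intro; subst; lra).
  destruct w as [w1 w2]; unfold lin, rot, sqnorm in *; cbn [fst snd] in *.
  assert (e : s * (B * w1 - A * w2) = 0) by lra.
  apply Rmult_integral in e as [|e]; [contradiction|].
  assert (h1 : (A ^ 2 + B ^ 2) * w1 = 0) by nra.
  assert (h2 : (A ^ 2 + B ^ 2) * w2 = 0) by nra.
  apply Rmult_integral in h1 as [|h1]; [lra|]. apply Rmult_integral in h2 as [|h2]; [lra|].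
  subst; lra.
Qed.

Lemma conic_rot_chord_exists :
  exists u, 0 < sqnorm u /\ conic b A B u = 0 /\ conic b A B (rot s u) = 0.
Proof.
  destruct (harmonic_cubic_root_exists C1 C2 D1 D2 chord_harmonic_bound)
    as (w1 & w2 & hw & hH).
  set (w := (w1, w2)).
  assert (hF : chord_cubic s b A B w = 0) by (rewrite chord_cubic_harmonic; exact hH).
  pose proof (chord_cubic_root_lin_neq0 w hw hF) as hL.
  assert (hQ : 0 < quad b w) by (apply quad_pos; [lra | exact hw]).
  set (k := - lin A B w / quad b w).
  assert (hk : k <> 0) by (unfold k; intro h; apply hL; field_simplify_eq in h; lra).
  exists (vscale k w); split; [|split].
  - unfold sqnorm, vscale, w in *; cbn [fst snd] in *.
    replace ((k * w1) ^ 2 + (k * w2) ^ 2) with (k * k * (w1 ^ 2 + w2 ^ 2)) by ring.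
    exact (Rmult_lt_0_compat _ _ (Rsqr_pos_lt k hk) hw).
  - rewrite conic_vscale. unfold k. field. lra.
  - rewrite rot_vscale, conic_vscale. unfold chord_cubic in hF. apply Rmult_eq_0_compat_l.
    unfold k. field_simplify_eq; lra.
Qed.

Lemma conic_rot_chord_unique u v : 0 < sqnorm u -> 0 < sqnorm v ->
  conic b A B u = 0 -> conic b A B (rot s u) = 0 ->
  conic b A B v = 0 -> conic b A B (rot s v) = 0 -> v = u.
Proof.
  intros hu hv hcu hcru hcv hcrv.
  pose proof (chord_cubic_of_conic s b A B u hcu hcru) as hFu.
  pose proof (chord_cubic_of_conic s b A B v hcv hcrv) as hFv.
  rewrite chord_cubic_harmonic in hFu, hFv.
  pose proof (harmonic_cubic_roots_parallel C1 C2 D1 D2 chord_harmonic_bound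
                _ _ _ _ hu hv hFu hFv) as hx.
  rewrite (cross_eq0_vscale u v hu hx) in hcv, hv |- *.
  set (k := (fst u * fst v + snd u * snd v) / sqnorm u) in *.
  assert (hk : k <> 0).
  { intro h0; rewrite h0 in hv; unfold sqnorm, vscale in hv; cbn [fst snd] in hv; lra. }
  assert (hQ : 0 < quad b u) by (apply quad_pos; lra).
  rewrite conic_vscale in hcv. unfold conic in hcu.
  apply Rmult_integral in hcv as [|hcv]; [contradiction|].
  replace k with 1 by nra.
  destruct u; unfold vscale; cbn [fst snd]; f_equal; ring.
Qed.
End RotatedChords.

Lemma ellipse_param_bounds a : 1 < a -> a <= sqrt 2 -> 1 / 2 <= / a ^ 2 < 1.
Proof.
  intros ha1 ha2.
  assert (ha : a ^ 2 <= 2).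
  { replace 2 with (sqrt 2 ^ 2) by (simpl; rewrite Rmult_1_r; apply sqrt_sqrt; lra).
    apply pow_incr; lra. }
  split.
  - apply (Rmult_le_reg_r (a ^ 2)); [nra|]. rewrite Rinv_l by nra. lra.
  - apply (Rmult_lt_reg_r (a ^ 2)); [nra|]. rewrite Rinv_l by nra. nra.
Qed.

Lemma on_ellipse_conic a p q : 0 < a -> on_ellipse a p ->
  on_ellipse a q <-> conic (/ a ^ 2) (/ a ^ 2 * fst p) (snd p) (vsub q p) = 0.
Proof.
  unfold on_ellipse, conic, lin, quad, vsub; cbn [fst snd]; intros ha hp.
  replace ((fst p / a) ^ 2) with (/ a ^ 2 * fst p ^ 2) in hp by (field; lra).
  replace ((fst q / a) ^ 2) with (/ a ^ 2 * fst q ^ 2) by (field; lra).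
  split; intro h; nra.
Qed.

Lemma on_ellipse_base_nonzero a p : 0 < a -> on_ellipse a p ->
  0 < (/ a ^ 2 * fst p) ^ 2 + snd p ^ 2.
Proof.
  unfold on_ellipse; intros ha hp.
  assert (hb : 0 < / a ^ 2) by (apply Rinv_0_lt_compat, pow_lt; lra).
  replace ((fst p / a) ^ 2) with (/ a ^ 2 * fst p ^ 2) in hp by (field; lra).
  pose proof (pow2_ge_0 (fst p)); pose proof (pow2_ge_0 (snd p)).
  destruct (Rle_lt_dec (/ a ^ 2) 1); nra.
Qed.

Theorem mainTheorem17 (a : R) (ha1 : 1 < a) (ha2 : a <= sqrt 2)
  (p : point) (hp : on_ellipse a p) :
  exists q r : point,
    inscribed_equilateral a p q r /\
    forall q' r' : point, inscribed_equilateral a p q' r' ->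
      (q' = q /\ r' = r) \/ (q' = r /\ r' = q).
Proof.
  assert (ha : 0 < a) by lra.
  assert (hb : 3 / 7 < / a ^ 2 <= 1) by (pose proof (ellipse_param_bounds a ha1 ha2); lra).
  assert (hs : sqrt 3 * sqrt 3 = 3) by (apply sqrt_sqrt; lra).
  pose proof (on_ellipse_base_nonzero a p ha hp) as hAB.
  pose proof (fun q => on_ellipse_conic a p q ha hp) as hconic.
  destruct (conic_rot_chord_exists _ _ _ _ hs hb hAB) as (u & hu & hcu & hcru).
  exists (vadd p u), (vadd p (rot (sqrt 3) u)). split.
  - refine (conj hp (conj _ (conj _ (equilateral_rot _ hs p u hu))));
      apply hconic; rewrite vsub_vadd; assumption.
  - intros q r (_ & hq & hr & heq). rewrite hconic in hq, hr.
    destruct (equilateral_vertex _ hs _ _ _ heq) as (hw & [hrot | hrot]); [left | right].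
    + assert (hqu : vsub q p = u)
        by (apply (conic_rot_chord_unique _ _ _ _ hs hb hAB); congruence).
      rewrite <- hqu, <- hrot, !vadd_vsub. auto.
    + assert (hwr : 0 < sqnorm (vsub r p))
        by (rewrite <- (sqnorm_rot _ hs), <- hrot; exact hw).
      assert (hru : vsub r p = u)
        by (apply (conic_rot_chord_unique _ _ _ _ hs hb hAB); congruence).
      rewrite <- hru, <- hrot, !vadd_vsub. auto.
Qed.
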